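(* For every $\delta>0$ there exist $C>0$ and a sequence $(\varepsilon_j)_{j\in\mathbb N}$ in $(0,1)$ with $\varepsilon_j\to0$, $\varepsilon_j/2\le\varepsilon_{j+1}\le\varepsilon_j$ for all $j$, and such that for all $j\in\mathbb N$ and all integers $n\ge1$, $$\phi_n^j:=\inf\{|\varepsilon_j-p/n|:\ p\in\mathbb Z\}\ \ge\ C\,\varepsilon_j\,e^{-n^2\pi^2\delta}.$$ *)

From Stdlib Require Import Reals.
Open Scope R_scope.

(* phi_n^j >= c  is expressed as: every element of {|eps - p/n| : p in Z} is >= c,
   i.e. the infimum is >= c. *)
Definition dist_lattice_ge (e : R) (n : nat) (c : R) : Prop :=
  forall p : Z, Rabs (e - IZR p / INR n) >= c.

(* Take eps_j = sqrt 2 / 2^(j+1).  Since sqrt 2 is a quadratic irrational,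
   |sqrt 2 * n - z| >= 1/(4n) for every integer z, and dividing by the
   integer 2^(j+1) turns this into |eps_j - p/n| >= eps_j / (4 sqrt 2 n^2).
   The factor 1/n^2 dominates a multiple of exp(-n^2 pi^2 delta), because
   x exp(-x) <= 1. *)
From Stdlib Require Import Reals Lra Lia Psatz ZArith Arith.
Open Scope R_scope.

Lemma nat_sq_eq_double_sq (m n : nat) : (m * m = 2 * n * n)%nat -> n = 0%nat.
Proof.
  revert m; induction n as [n IH] using (well_founded_induction lt_wf); intros m E.
  destruct n as [|n']; [reflexivity|].
  destruct (Nat.Even_or_Odd m) as [[k Hk]|[k Hk]]; subst m; [|exfalso; nia].
  assert (Hk0 : k = 0%nat) by (apply (IH k ltac:(nia) (S n')); nia).
  subst k; nia.
Qed.

Lemma double_sq_sub_sq_neq0 (n : nat) (z : Z) :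
  (1 <= n)%nat -> (2 * Z.of_nat n * Z.of_nat n - z * z)%Z <> 0%Z.
Proof.
  intros Hn E.
  enough (Habs : (Z.abs_nat z * Z.abs_nat z = 2 * n * n)%nat)
    by (apply nat_sq_eq_double_sq in Habs; lia).
  lia.
Qed.

Lemma Rabs_IZR_ge_1 (z : Z) : z <> 0%Z -> 1 <= Rabs (IZR z).
Proof. intro Hz; rewrite Rabs_Zabs; apply IZR_le; lia. Qed.

Lemma sqrt2_bounds : 1.4 < sqrt 2 < 1.5.
Proof.
  pose proof (sqrt_def 2 ltac:(lra)); pose proof (sqrt_pos 2); nra.
Qed.

Definition badly_approximable (x c : R) : Prop :=
  forall (n : nat) (z : Z), (1 <= n)%nat -> c / INR n <= Rabs (x * INR n - IZR z).

Lemma sqrt2_badly_approximable : badly_approximable (sqrt 2) (1 / 4).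
Proof.
  intros n z Hn.
  assert (HN : 1 <= INR n) by exact (le_INR 1 n Hn).
  pose proof sqrt2_bounds as Hs.
  set (d := sqrt 2 * INR n - IZR z).
  destruct (Rle_or_lt (1 / 4) (Rabs d)) as [Hfar|Hnear].
  { assert (Hinv : 0 < / INR n <= 1)
      by (split; [apply Rinv_0_lt_compat; lra|rewrite <- Rinv_1; apply Rinv_le_contravar; lra]).
    unfold Rdiv in *; nra. }
  set (s := sqrt 2 * INR n + IZR z).
  assert (Hs_le : Rabs s <= 4 * INR n).
  { destruct (Rabs_def2 _ _ Hnear); apply Rabs_le; unfold s, d in *; nra. }
  (* d * s = 2 n^2 - z^2 is a nonzero integer *)
  assert (Hprod : 1 <= Rabs d * Rabs s).
  { rewrite <- Rabs_mult.
    replace (d * s) with (IZR (2 * Z.of_nat n * Z.of_nat n - z * z)).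
    - exact (Rabs_IZR_ge_1 _ (double_sq_sub_sq_neq0 n z Hn)).
    - unfold d, s; rewrite minus_IZR, !mult_IZR, <- INR_IZR_INZ.
      transitivity ((sqrt 2 * sqrt 2) * INR n * INR n - IZR z * IZR z);
        [rewrite sqrt_sqrt by lra|]; ring. }
  apply (Rmult_le_reg_r (4 * INR n)); [lra|].
  replace (1 / 4 / INR n * (4 * INR n)) with 1 by (field; lra).
  pose proof (Rabs_pos d); nra.
Qed.

Lemma badly_approximable_div (x c : R) (K n : nat) (p : Z) :
  badly_approximable x c -> (1 <= K)%nat -> (1 <= n)%nat ->
  c / (INR K * INR n ^ 2) <= Rabs (x / INR K - IZR p / INR n).
Proof.
  intros Hx HK Hn.
  assert (HK1 : 1 <= INR K) by exact (le_INR 1 K HK).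
  assert (HN1 : 1 <= INR n) by exact (le_INR 1 n Hn).
  assert (Hscale : x / INR K - IZR p / INR n
                   = (x * INR n - IZR (p * Z.of_nat K)) / (INR K * INR n)).
  { rewrite mult_IZR, <- INR_IZR_INZ; field; lra. }
  rewrite Hscale; unfold Rdiv at 2.
  rewrite Rabs_mult, Rabs_inv, (Rabs_right (INR K * INR n)) by nra.
  replace (c / (INR K * INR n ^ 2)) with (c / INR n / (INR K * INR n))
    by (field; lra).
  apply Rmult_le_compat_r; [apply Rlt_le, Rinv_0_lt_compat; nra|].
  exact (Hx n _ Hn).
Qed.

Lemma Rmult_exp_neg_le_1 (x : R) : 0 <= x -> x * exp (- x) <= 1.
Proof.
  intro Hx.
  pose proof (exp_ineq1_le x); pose proof (exp_pos (- x)).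
  assert (Hinv : exp (- x) * exp x = 1) by (rewrite <- exp_plus, Rplus_opp_l; exact exp_0).
  nra.
Qed.

Theorem lemma3 (delta : R) (hdelta : 0 < delta) :
  exists (C : R) (eps : nat -> R),
    0 < C /\
    (forall j, 0 < eps j < 1) /\
    Un_cv eps 0 /\
    (forall j, eps j / 2 <= eps (S j) <= eps j) /\
    (forall (j n : nat), (1 <= n)%nat ->
       dist_lattice_ge (eps j) n
         (C * eps j * exp (- (INR n ^ 2 * PI ^ 2 * delta)))).
Proof.
  pose proof sqrt2_bounds as Hs.
  set (a := PI ^ 2 * delta).
  assert (Ha : 0 < a) by (apply Rmult_lt_0_compat; [apply pow_lt, PI_RGT_0|exact hdelta]).
  assert (Hpow : forall j, 1 <= 2 ^ j) by (intro j; apply pow_R1_Rle; lra).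
  exists (a / 4 / sqrt 2), (fun j => sqrt 2 / 2 / 2 ^ j).
  split; [apply Rdiv_lt_0_compat; lra|].
  split.
  { intro j; specialize (Hpow j); split; [apply Rdiv_lt_0_compat; lra|].
    apply (Rmult_lt_reg_r (2 ^ j)); [lra|]; field_simplify; lra. }
  split; [exact (cv_pow_half (sqrt 2 / 2))|].
  split.
  { intro j; specialize (Hpow j); simpl.
    replace (sqrt 2 / 2 / (2 * 2 ^ j)) with (sqrt 2 / 2 / 2 ^ j / 2) by (field; lra).
    assert (0 < sqrt 2 / 2 / 2 ^ j) by (apply Rdiv_lt_0_compat; lra); lra. }
  intros j n Hn p.
  assert (HK : (1 <= 2 ^ S j)%nat) by (apply Nat.neq_0_lt_0, Nat.pow_nonzero; lia).
  pose proof (badly_approximable_div _ _ _ _ p sqrt2_badly_approximable HK Hn) as Hp.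
  rewrite pow_INR in Hp; replace (INR 2) with 2 in Hp by (simpl; lra).
  assert (HN : 1 <= INR n) by exact (le_INR 1 n Hn).
  specialize (Hpow j); set (N := INR n) in *.
  replace (sqrt 2 / 2 ^ S j) with (sqrt 2 / 2 / 2 ^ j) in Hp by (simpl; field; lra).
  apply Rle_ge, Rle_trans with (2 := Hp).
  replace (N ^ 2 * PI ^ 2 * delta) with (N ^ 2 * a) by (unfold a; ring).
  replace (a / 4 / sqrt 2 * (sqrt 2 / 2 / 2 ^ j) * exp (- (N ^ 2 * a)))
    with (1 / 4 / (2 ^ S j * N ^ 2) * (N ^ 2 * a * exp (- (N ^ 2 * a))))
    by (simpl; field; lra).
  rewrite <- (Rmult_1_r (1 / 4 / (2 ^ S j * N ^ 2))) at 2.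
  apply Rmult_le_compat_l.
  - simpl; apply Rlt_le, Rdiv_lt_0_compat; nra.
  - apply Rmult_exp_neg_le_1; nra.
Qed.
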